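(* Let $f(y_1,\dots,y_k,z_1,\dots,z_l)\in\mathbb{R}\langle Y;Z\rangle$ be a multilinear $*$-polynomial, and let $M_n(\mathbb{R})$ be endowed with the transpose involution. Let \[ g(y_1,\dots,y_{k+2l})=f(y_1,\dots,y_k,[y_{k+1},y_{k+2}],\dots,[y_{k+2l-1},y_{k+2l}]). \] Then the image of $f$ on $M_n(\mathbb{R})$, i.e. $\{f(a_1,\dots,a_k,b_1,\dots,b_l): a_i \text{ symmetric}, b_j \text{ skew-symmetric}\}$, equals the image of $g$ evaluated on symmetric matrices, i.e. $\{g(c_1,\dots,c_{k+2l}): c_i\in M_n(\mathbb{R}) \text{ symmetric}\}$.
   Context: $\mathbb{R}\langle Y;Z\rangle$ is the free associative algebra over $\mathbb{R}$ on symmetric variables $Y=\{y_1,y_2,\dots\}$ and skew-symmetric variables $Z=\{z_1,z_2,\dots\}$; $[u,v]=uv-vu$. A multilinear polynomial is one in which each variable occurs exactly once in every monomial. *)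

From HB Require Import structures.
From mathcomp Require Import all_boot all_order all_algebra all_fingroup.
From mathcomp Require Import reals.
Set Implicit Arguments. Unset Strict Implicit. Unset Printing Implicit Defensive.
Import Order.TTheory GRing.Theory Num.Theory.
Local Open Scope ring_scope.

(* A multilinear polynomial in the m noncommuting variables x_0,...,x_{m-1}
   is a linear combination of the monomials x_{s 0} x_{s 1} ... x_{s (m-1)},
   s a permutation of 'I_m: we represent it by its coefficient function. *)
Definition mlpoly (R : nzRingType) (m : nat) := {ffun 'S_m -> R}.

Definition mxprod (R : nzRingType) (n m : nat) (F : 'I_m -> 'M[R]_n) : 'M[R]_n :=
  \big[@mulmx R n n n / 1%:M]_(i < m) F i.

Definition mleval (R : nzRingType) (n m : nat) (f : mlpoly R m)
    (x : 'I_m -> 'M[R]_n) : 'M[R]_n :=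
  \sum_(s : 'S_m) f s *: mxprod (fun i => x (s i)).

(* Assignment of the first k variables (y's) and the last l variables (z's). *)
Definition join_vars (T : Type) (k l : nat) (a : 'I_k -> T) (b : 'I_l -> T)
    (i : 'I_(k + l)) : T :=
  match split i with inl j => a j | inr j => b j end.

Definition mxsym (R : nzRingType) (n : nat) (A : 'M[R]_n) : Prop := A^T = A.
Definition mxskew (R : nzRingType) (n : nat) (A : 'M[R]_n) : Prop := A^T = - A.

Definition mxcomm (R : nzRingType) (n : nat) (A B : 'M[R]_n) : 'M[R]_n :=
  A *m B - B *m A.

From HB Require Import structures.
From mathcomp Require Import all_boot all_order all_algebra all_fingroup.
From mathcomp Require Import reals.
Set Implicit Arguments.
Unset Strict Implicit.
Import GRing.Theory Num.Theory.
Local Open Scope ring_scope.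

(* Commutators of symmetric matrices are skew-symmetric; conversely every skew
   matrix B is the commutator [C, D] of the symmetric matrices
   D = diag(0, 1, ..., n-1) and C_ij = B_ij / (j - i), because
   [C, D]_ij = (j - i) C_ij.  Substituting such commutators for the skew
   variables of f shows that f and g have the same image. *)

Lemma eq_mleval (R : nzRingType) (n m : nat) (f : mlpoly R m)
    (x y : 'I_m -> 'M[R]_n) :
  x =1 y -> mleval f x = mleval f y.
Proof.
by move=> exy; apply: eq_bigr => s _; congr (_ *: _); apply: eq_bigr.
Qed.

Lemma eq_join_vars (T : Type) (k l : nat) (a : 'I_k -> T) (b b' : 'I_l -> T) :
  b =1 b' -> join_vars a b =1 join_vars a b'.
Proof. by move=> ebb' i; rewrite /join_vars; case: split. Qed.

Lemma mxcomm_sym_skew (R : comNzRingType) (n : nat) (A B : 'M[R]_n) :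
  mxsym A -> mxsym B -> mxskew (mxcomm A B).
Proof.
by rewrite /mxsym /mxskew /mxcomm => sA sB; rewrite linearB /= !trmx_mul sA sB opprB.
Qed.

Lemma mxskewE (R : nzRingType) (n : nat) (B : 'M[R]_n) (i j : 'I_n) :
  mxskew B -> B j i = - B i j.
Proof. by move/(congr1 (fun A : 'M[R]_n => A i j)); rewrite !mxE. Qed.

Lemma mxskew_diag0 (R : numDomainType) (n : nat) (B : 'M[R]_n) (i : 'I_n) :
  mxskew B -> B i i = 0.
Proof. by move/(mxskewE i i)/eqP; rewrite eq_sym eqNr => /eqP. Qed.

Section RampCommutator.

Variables (R : numFieldType) (n : nat).

Definition ramp_mx : 'M[R]_n := diag_mx (\row_(i < n) (i : nat)%:R).

(* The diagonal entries are B i i / 0 = 0. *)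
Definition ramp_div (B : 'M[R]_n) : 'M[R]_n :=
  \matrix_(i, j) (B i j / ((j : nat)%:R - (i : nat)%:R)).

Lemma ramp_mx_sym : mxsym ramp_mx.
Proof. exact: tr_diag_mx. Qed.

Lemma ramp_div_sym (B : 'M[R]_n) : mxskew B -> mxsym (ramp_div B).
Proof.
move=> skB; apply/matrixP => i j; rewrite !mxE.
by rewrite (mxskewE i j skB) -opprB invrN mulrNN.
Qed.

Lemma mxcomm_ramp_div (B : 'M[R]_n) : mxskew B -> mxcomm (ramp_div B) ramp_mx = B.
Proof.
move=> skB; apply/matrixP => i j.
rewrite /mxcomm /ramp_mx mul_mx_diag mul_diag_mx !mxE.
have [<-|neq_ij] := eqVneq i j; first by rewrite (mxskew_diag0 i skB) !mul0r mulr0 subrr.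
have nz_ji : (j : nat)%:R - (i : nat)%:R != 0 :> R.
  by rewrite subr_eq0 eqr_nat eq_sym; apply: contra neq_ij => /eqP/val_inj->.
by rewrite [_%:R * _]mulrC -mulrBr divfK.
Qed.

End RampCommutator.

Theorem mainTheorem5 (R : realType) (n k l : nat) (f : mlpoly R (k + l))
    (M : 'M[R]_n) :
  (exists (a : 'I_k -> 'M[R]_n) (b : 'I_l -> 'M[R]_n),
      (forall i, mxsym (a i)) /\ (forall j, mxskew (b j)) /\
      M = mleval f (join_vars a b))
  <->
  (exists (c : 'I_k -> 'M[R]_n) (d e : 'I_l -> 'M[R]_n),
      (forall i, mxsym (c i)) /\ (forall j, mxsym (d j)) /\
      (forall j, mxsym (e j)) /\
      M = mleval f (join_vars c (fun j => mxcomm (d j) (e j)))).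
Proof.
split.
  move=> [a [b [sa [skb ->]]]].
  exists a, (fun j => ramp_div (b j)), (fun=> ramp_mx R n).
  do !split => //.
  - by move=> j; apply: ramp_div_sym.
  - by move=> _; apply: ramp_mx_sym.
  by apply/eq_mleval/eq_join_vars => j; rewrite mxcomm_ramp_div.
move=> [c [d [e [sc [sd [se ->]]]]]].
exists c, (fun j => mxcomm (d j) (e j)); split; [exact: sc | split=> [j|//]].
exact: mxcomm_sym_skew.
Qed.
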